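(* Let $G=(\mathcal{V},\mathcal{E})$ be a hypergraph, $P$ a pmf on $\mathcal{V}$, $L\ge1$, and suppose $G_P$ is complete multipartite with partition $\{\mathcal{I}_j\}_{j=1}^k$ of $\mathrm{supp}(P)$ into independent sets. Define the pmf $P^*$ on $[k]$ by $P^*(j)=\sum_{v\in\mathcal{I}_j}P(v)$. Then $I_{L+1}(G,P)=H_{L+1}(P^* )$ and for every $\ell\in[L+1]$, $$\theta^{(\ell)}_{L+1}(G,P)=2H_{L+1}(P^* )-\frac{2L+1-\ell}{L}H_{2L+2-\ell}(P^* ).$$
   Context: Notation: $[j]=\{1,\dots,j\}$, $[i:j]=\{i,\dots,j\}$; $\log$ base 2. A hypergraph $G=(\mathcal{V},\mathcal{E})$ has finite $\mathcal{V}$ and $\mathcal{E}\subseteq2^{\mathcal{V}}$ with edges of cardinality $\ge2$. An independent set is a vertex subset none of whose subsets is an edge; a hypergraph is complete multipartite with partition $\{\mathcal{I}_j\}$ of its vertex set into independent sets if every vertex subset is either an edge or contained in some $\mathcal{I}_j$. $G_P=(\mathcal{V}_P,\mathcal{E}_P)$ with $\mathcal{V}_P=\mathrm{supp}(P)$ and $\mathcal{E}_P$ the edges of $G$ contained in $\mathcal{V}_P$. For $v_{[k]}\in\mathcal{V}^k$, $\sigma(v_{[k]})=\{v_1,\dots,v_k\}$, $P(v_S)=\prod_{j\in S}P(v_j)$. $I_{L+1}(G,P):=-\frac1L\log\sum_{v_{[L+1]}:\sigma(v_{[L+1]})\notin\mathcal{E}}P(v_{[L+1]})$, $\theta^{(L+1)}_{L+1}(G,P):=I_{L+1}(G,P)$,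 and for $\ell\in[L]$, $\theta^{(\ell)}_{L+1}(G,P):=2I_{L+1}(G,P)+\frac1L\log\sum_{v_{[\ell]}}P(v_{[\ell]})\Big[\sum_{v_{[\ell+1:L+1]}:\sigma(v_{[L+1]})\notin\mathcal{E}}P(v_{[\ell+1:L+1]})\Big]^2$. The Rényi entropy of order $\alpha\ge2$ is $H_\alpha(Q)=-\frac{1}{\alpha-1}\log\sum_uQ(u)^\alpha$. *)

From Stdlib Require Import Reals.
From mathcomp Require Import all_boot.

Set Implicit Arguments.
Unset Strict Implicit.
Unset Printing Implicit Defensive.

Local Open Scope R_scope.

Definition log2 (x : R) : R := ln x / ln 2.

Definition R_zero : R := 0.
Definition R_one : R := 1.
Notation "\rsum_ ( i : T | C ) F" := (\big[Rplus/R_zero]_(i : T | C) F)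
  (at level 41, F at level 41, i, T at level 50).
Notation "\rsum_ ( i : T ) F" := (\big[Rplus/R_zero]_(i : T) F)
  (at level 41, F at level 41, i, T at level 50).

Section Defs.
Variable V : finType.

Definition is_hypergraph (E : {set {set V}}) : Prop :=
  forall e, e \in E -> (2 <= #|e|)%N.

Definition is_pmf (P : V -> R) : Prop :=
  (forall v, 0 <= P v) /\ \rsum_(v : V) P v = 1.

Definition supp (P : V -> R) : {set V} :=
  [set v | if Rlt_dec 0 (P v) then true else false].

Definition independent (E : {set {set V}}) (A : {set V}) : Prop :=
  forall S : {set V}, S \subset A -> S \notin E.

Definition edges_P (E : {set {set V}}) (P : V -> R) : {set {set V}} :=
  [set e in E | e \subset supp P].

Definition complete_multipartite_P (E : {set {set V}}) (P : V -> R)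
    (k : nat) (I : 'I_k -> {set V}) : Prop :=
  [/\ (forall j, I j != set0),
      (forall i j, i != j -> [disjoint I i & I j]),
      \bigcup_(j < k) I j = supp P,
      (forall j, independent (edges_P E P) (I j)) &
      (forall S : {set V}, S \subset supp P ->
          S \in edges_P E P \/ exists j, S \subset I j)].

Definition sigma n (v : {ffun 'I_n -> V}) : {set V} := [set v i | i : 'I_n].

Definition Pprod (P : V -> R) n (v : {ffun 'I_n -> V}) : R :=
  \big[Rmult/R_one]_(i < n) P (v i).

Definition I_Lp1 (E : {set {set V}}) (P : V -> R) (L : nat) : R :=
  - / INR L * log2 (\rsum_(v : {ffun 'I_L.+1 -> V} | sigma v \notin E) Pprod P v).

(* theta^{(l)}_{L+1}(G,P), for l in [L+1]; the tuple v_[L+1] is split as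
   the prefix v_[l] (a) and the suffix v_[l+1:L+1] (b), so that
   sigma(v_[L+1]) = sigma(a) :|: sigma(b). *)
Definition theta (E : {set {set V}}) (P : V -> R) (L l : nat) : R :=
  if (l == L.+1)%N then I_Lp1 E P L
  else 2 * I_Lp1 E P L + / INR L * log2
    (\rsum_(a : {ffun 'I_l -> V})
       Pprod P a *
       (\rsum_(b : {ffun 'I_(L.+1 - l) -> V} | (sigma a :|: sigma b) \notin E)
          Pprod P b) ^ 2).

End Defs.

Definition renyi (k alpha : nat) (Q : 'I_k -> R) : R :=
  - / INR (alpha - 1) * log2 (\rsum_(u : 'I_k) Q u ^ alpha).

(** Every tuple whose vertex set leaves [supp P] has weight zero, and a
    nonempty vertex set inside [supp P] is a non-edge exactly when it lies in
    some part [I j] -- and then in exactly one part, the parts being disjoint.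
    Hence every sum over non-edge tuples splits into one sum per part, and a
    tuple with all coordinates in [I j] has total weight [P*(j)^n].  This
    turns the sum defining [I_{L+1}] into [sum_j P*(j)^(L+1)] and the sum in
    [theta^(l)] into [sum_j P*(j)^(2L+2-l)], which are the Rényi power sums. *)

From HB Require Import structures.
From Pilot Require Import Defs.
From Stdlib Require Import Reals Lra.
From mathcomp Require Import all_boot zify.

Set Implicit Arguments.
Unset Strict Implicit.
Unset Printing Implicit Defensive.

Local Open Scope R_scope.

HB.instance Definition _ := Monoid.isComLaw.Build R R_zero Rplus
  (fun x y z => esym (Rplus_assoc x y z)) Rplus_comm Rplus_0_l.
HB.instance Definition _ := Monoid.isComLaw.Build R R_one Rmult
  (fun x y z => esym (Rmult_assoc x y z)) Rmult_comm Rmult_1_l.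
HB.instance Definition _ := Monoid.isMulLaw.Build R R_zero Rmult
  Rmult_0_l Rmult_0_r.
HB.instance Definition _ := Monoid.isAddLaw.Build R Rmult Rplus
  Rmult_plus_distr_r Rmult_plus_distr_l.

Lemma prod_const_R n (c : R) : \big[Rmult/R_one]_(i < n) c = c ^ n.
Proof.
elim: n => [|n IHn]; first by rewrite big_ord0.
by rewrite big_ord_recr IHn /= Rmult_comm.
Qed.

Lemma sigma_ffun_neq0 (V : finType) n (v : {ffun 'I_n.+1 -> V}) :
  Defs.sigma v != set0.
Proof. by apply/set0Pn; exists (v ord0); apply: imset_f. Qed.

Lemma log2_renyi_sum k alpha (Q : 'I_k -> R) : (1 < alpha)%N ->
  log2 (\rsum_(u : 'I_k) Q u ^ alpha) = - INR (alpha - 1) * renyi alpha Q.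
Proof.
move=> alpha_gt1; have alpha1_neq0 : INR (alpha - 1) <> 0.
  by apply: not_0_INR; lia.
by rewrite /renyi; field.
Qed.

Section CompleteMultipartite.

Variables (V : finType) (E : {set {set V}}) (P : V -> R).
Variables (k : nat) (I : 'I_k -> {set V}).
Hypothesis P_ge0 : forall v, 0 <= P v.
Hypothesis multipartite : complete_multipartite_P E P I.

Definition block_mass (j : 'I_k) : R := \rsum_(v : V | v \in I j) P v.

Lemma Pprod_eq0 n (v : {ffun 'I_n -> V}) :
  ~~ (Defs.sigma v \subset supp P) -> Pprod P v = 0.
Proof.
case/subsetPn=> _ /imsetP[i _ ->]; rewrite inE; case: Rlt_dec => // Pvi_le0 _.
have Pvi0 : P (v i) = 0 by have := P_ge0 (v i); lra.
by rewrite /Pprod (bigD1 i) //= Pvi0 Rmult_0_l.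
Qed.

Lemma sum_Pprod_subset_block n j :
  \rsum_(v : {ffun 'I_n -> V} | Defs.sigma v \subset I j) Pprod P v
  = block_mass j ^ n.
Proof.
rewrite -prod_const_R bigA_distr_big; apply: eq_bigl => v.
apply/subsetP/ffun_onP => [sub_vI i | vI _ /imsetP[i _ ->]]; last exact: vI.
by apply: sub_vI; apply: imset_f.
Qed.

Lemma notin_edgesE (A : {set V}) : A \subset supp P ->
  (A \notin E) = [exists j, A \subset I j].
Proof.
case: multipartite => _ _ _ indep complete A_supp.
apply/idP/existsP => [A_notE | [j A_Ij]].
  by case: (complete A A_supp) => [|//]; rewrite inE A_supp andbT (negbTE A_notE).
by apply/negP=> A_E; have := indep j A A_Ij; rewrite inE A_E A_supp.
Qed.

Lemma subset_block_unique (A : {set V}) i j :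
  A != set0 -> A \subset I i -> A \subset I j -> i = j.
Proof.
case/set0Pn=> x Ax /subsetP A_Ii /subsetP A_Ij; apply/eqP/negPn/negP => neq_ij.
case: multipartite => _ disj _ _ _.
by have := disjointFr (disj i j neq_ij) (A_Ii x Ax); rewrite A_Ij.
Qed.

Lemma sum_blocks_containing (A : {set V}) j0 (f : 'I_k -> R) :
  A != set0 -> A \subset I j0 -> \rsum_(j : 'I_k | A \subset I j) f j = f j0.
Proof.
move=> A_neq0 A_Ij0; apply: big_pred1 => j /=.
apply/idP/eqP => [A_Ij | ->//]; exact: subset_block_unique A_Ij A_Ij0.
Qed.

Lemma sqr_sum_blocks_containing (A : {set V}) (f : 'I_k -> R) : A != set0 ->
  (\rsum_(j : 'I_k | A \subset I j) f j) ^ 2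
  = \rsum_(j : 'I_k | A \subset I j) f j ^ 2.
Proof.
move=> A_neq0; case: (pickP (fun j => A \subset I j)) => [j0 A_Ij0 | no_block].
  by rewrite !(sum_blocks_containing _ A_neq0 A_Ij0).
by rewrite !big_pred0 //= /R_zero; lra.
Qed.

Lemma notin_edges_sum_blocks (A : {set V}) (c : R) :
  A != set0 -> A \subset supp P ->
  (if A \notin E then c else 0) = \rsum_(j : 'I_k | A \subset I j) c.
Proof.
move=> A_neq0 A_supp; rewrite notin_edgesE //.
case: existsP => [[j0 A_Ij0] | no_block].
  by rewrite (sum_blocks_containing (fun=> c) A_neq0 A_Ij0).
by rewrite big_pred0 // => j; apply/negP => A_Ij; apply: no_block; exists j.
Qed.

Lemma sum_Pprod_notin_edges n :
  \rsum_(v : {ffun 'I_n.+1 -> V} | Defs.sigma v \notin E) Pprod P v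
  = \rsum_(j : 'I_k) block_mass j ^ n.+1.
Proof.
transitivity (\rsum_(v : {ffun 'I_n.+1 -> V})
                \rsum_(j : 'I_k | Defs.sigma v \subset I j) Pprod P v).
  rewrite big_mkcond; apply: eq_bigr => v _.
  have [v_supp | v_out] := boolP (Defs.sigma v \subset supp P).
    exact: notin_edges_sum_blocks (sigma_ffun_neq0 v) v_supp.
  by rewrite Pprod_eq0 // big1 //; case: ifP.
rewrite (exchange_big_dep xpredT) //=; apply: eq_bigr => j _.
exact: sum_Pprod_subset_block.
Qed.

Lemma sum_Pprod_suffix_notin_edges l m (a : {ffun 'I_l.+1 -> V}) :
  Defs.sigma a \subset supp P ->
  \rsum_(b : {ffun 'I_m -> V} | (Defs.sigma a :|: Defs.sigma b) \notin E)
     Pprod P b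
  = \rsum_(j : 'I_k | Defs.sigma a \subset I j) block_mass j ^ m.
Proof.
move=> a_supp; under [RHS]eq_bigr do rewrite -sum_Pprod_subset_block big_mkcond.
rewrite exchange_big big_mkcond; apply: eq_bigr => b _.
have [b_supp | b_out] := boolP (Defs.sigma b \subset supp P).
  rewrite -big_mkcondr; under eq_bigl do rewrite -subUset.
  apply: notin_edges_sum_blocks; last by rewrite subUset a_supp.
  by rewrite setU_eq0 negb_and sigma_ffun_neq0.
by rewrite Pprod_eq0 // big1 => [|j _]; case: ifP.
Qed.

Lemma sum_Pprod_sqr_suffix l m :
  \rsum_(a : {ffun 'I_l.+1 -> V})
     Pprod P a *
     (\rsum_(b : {ffun 'I_m -> V} | (Defs.sigma a :|: Defs.sigma b) \notin E)
        Pprod P b) ^ 2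
  = \rsum_(j : 'I_k) block_mass j ^ (l.+1 + 2 * m).
Proof.
transitivity (\rsum_(a : {ffun 'I_l.+1 -> V})
                \rsum_(j : 'I_k | Defs.sigma a \subset I j)
                   Pprod P a * block_mass j ^ (2 * m)).
  apply: eq_bigr => a _.
  have [a_supp | a_out] := boolP (Defs.sigma a \subset supp P).
    rewrite sum_Pprod_suffix_notin_edges // sqr_sum_blocks_containing;
      last exact: sigma_ffun_neq0.
    by rewrite big_distrr; apply: eq_bigr => j _; rewrite -pow_mult mulnC.
  by rewrite Pprod_eq0 // Rmult_0_l big1 // => j _; rewrite Rmult_0_l.
rewrite (exchange_big_dep xpredT) //=; apply: eq_bigr => j _.
by rewrite -big_distrl /= sum_Pprod_subset_block -pow_add.
Qed.

End CompleteMultipartite.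

Theorem mainTheorem9 (V : finType) (E : {set {set V}}) (P : V -> R) (L : nat)
    (k : nat) (I : 'I_k -> {set V}) :
  is_hypergraph E ->
  is_pmf P ->
  (1 <= L)%N ->
  complete_multipartite_P E P I ->
  let Pstar := fun j : 'I_k => \rsum_(v : V | v \in I j) P v in
  I_Lp1 E P L = renyi L.+1 Pstar /\
  (forall l : nat, (1 <= l <= L.+1)%N ->
     theta E P L l =
       2 * renyi L.+1 Pstar
       - INR (2 * L + 1 - l) / INR L * renyi (2 * L + 2 - l) Pstar).
Proof.
move=> _ [P_ge0 _] L_ge1 multipartite Pstar.
have L_neq0 : INR L <> 0 by apply: not_0_INR; lia.
have block_mass_Pstar : block_mass P I = Pstar by [].
have I_renyi : I_Lp1 E P L = renyi L.+1 Pstar.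
  rewrite /I_Lp1 (sum_Pprod_notin_edges P_ge0 multipartite) log2_renyi_sum //.
  by rewrite block_mass_Pstar subSS subn0; field.
split=> // -[|l] //= l_le; rewrite /theta I_renyi.
case: eqP => [-> | l_neqL].
  have -> : (2 * L + 1 - L.+1 = L)%N by lia.
  have -> : (2 * L + 2 - L.+1 = L.+1)%N by lia.
  by field.
rewrite (sum_Pprod_sqr_suffix P_ge0 multipartite) log2_renyi_sum; last by lia.
rewrite block_mass_Pstar.
have -> : (l.+1 + 2 * (L.+1 - l.+1) = 2 * L + 2 - l.+1)%N by lia.
have -> : (2 * L + 2 - l.+1 - 1 = 2 * L + 1 - l.+1)%N by lia.
(* Abstracting the [INR] term keeps [ring] from normalizing its nat arithmetic. *)
rewrite /Rdiv; set c := INR (2 * L + 1 - l.+1).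
by set r := renyi (2 * L + 2 - l.+1) Pstar; ring.
Qed.
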